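(* Let $A$ be a (not necessarily associative or Lie) algebra over a field $\mathbb{F}$ with product $(x,y)\mapsto xy$. Then the set $\mathrm{BiDer}_r(A)$ of right biderivations of $A$, with pointwise vector space operations and bracket $\{B_1,B_2\}(x,y)=B_1(B_2(x,y),y)-B_2(B_1(x,y),y)$, is a Lie algebra over $\mathbb{F}$.
   Context: A right biderivation of an algebra $A$ is a map $B\colon A\times A\to A$ (not required to be linear in the second argument) which is linear in its first argument and satisfies $B(xy,z)=x\,B(y,z)+B(x,z)\,y$ for all $x,y,z\in A$. *)

From mathcomp Require Import all_boot all_algebra.
Set Implicit Arguments. Unset Strict Implicit. Unset Printing Implicit Defensive.
Import GRing.Theory.
Local Open Scope ring_scope.

Definition bilinear_product (F : fieldType) (A : lmodType F) (mul : A -> A -> A) :=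
  (forall (a : F) (x x' y : A), mul (a *: x + x') y = a *: mul x y + mul x' y) /\
  (forall (a : F) (x y y' : A), mul x (a *: y + y') = a *: mul x y + mul x y').

Definition right_biderivation (F : fieldType) (A : lmodType F)
    (mul : A -> A -> A) (B : A -> A -> A) :=
  (forall (a : F) (x x' z : A), B (a *: x + x') z = a *: B x z + B x' z) /\
  (forall x y z : A, B (mul x y) z = mul x (B y z) + mul (B x z) y).

Definition bzero (F : fieldType) (A : lmodType F) : A -> A -> A := fun _ _ => 0.
Definition badd (F : fieldType) (A : lmodType F) (B1 B2 : A -> A -> A) : A -> A -> A :=
  fun x y => B1 x y + B2 x y.
Definition bscale (F : fieldType) (A : lmodType F) (a : F) (B : A -> A -> A) : A -> A -> A :=
  fun x y => a *: B x y.

Definition bibracket (F : fieldType) (A : lmodType F) (B1 B2 : A -> A -> A) : A -> A -> A :=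
  fun x y => B1 (B2 x y) y - B2 (B1 x y) y.

(* For a right biderivation B, each map B(., z) is a derivation of A, and the
   vector space operations and the bracket of BiDer_r(A) act on these
   derivations z by z: the bracket is their commutator. So everything reduces
   to the facts that derivations are closed under linear combinations and
   commutators (in D1 D2 (xy) - D2 D1 (xy) the mixed terms cancel), and that
   the commutator of linear maps is bilinear, alternating and satisfies Jacobi. *)
From HB Require Import structures.
From mathcomp Require Import all_boot all_algebra ssrAC.
From Stdlib Require Import FunctionalExtensionality.
Set Implicit Arguments. Unset Strict Implicit. Unset Printing Implicit Defensive.
Import GRing.Theory.
Local Open Scope ring_scope.

Section LinearFunctions.
Variables (R : pzRingType) (U V : lmodType R) (f : U -> V).
Hypothesis f_linear : linear f.

Let fL : {linear U -> V} := HB.pack f (GRing.isLinear.Build _ _ _ _ f f_linear).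

Lemma lin_fun0 : f 0 = 0. Proof. exact: linear0 fL. Qed.
Lemma lin_funD x y : f (x + y) = f x + f y. Proof. exact: (linearD fL x y). Qed.
Lemma lin_funB x y : f (x - y) = f x - f y. Proof. exact: (linearB fL x y). Qed.
Lemma lin_funZ a x : f (a *: x) = a *: f x. Proof. exact: (linearZZ fL a x). Qed.

End LinearFunctions.

Section LieBracketOfFunctions.
Variables (R : pzRingType) (V : lmodType R).
Implicit Types (D : V -> V) (a : R) (x : V).

Definition lie_bracket_fun D1 D2 x := D1 (D2 x) - D2 (D1 x).

Lemma lie_bracket_fun_linear D1 D2 :
  linear D1 -> linear D2 -> linear (lie_bracket_fun D1 D2).
Proof.
move=> lin1 lin2 a x y; rewrite /lie_bracket_fun.
by rewrite !(lin_funD lin1, lin_funD lin2, lin_funZ lin1, lin_funZ lin2) scalerBr opprD addrACA.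
Qed.

Lemma lie_bracket_funDl a D1 D1' D2 x : linear D2 ->
  lie_bracket_fun (fun y => a *: D1 y + D1' y) D2 x
  = a *: lie_bracket_fun D1 D2 x + lie_bracket_fun D1' D2 x.
Proof. by move=> lin2; rewrite /lie_bracket_fun lin2 scalerBr opprD addrACA. Qed.

Lemma lie_bracket_funDr a D1 D2 D2' x : linear D1 ->
  lie_bracket_fun D1 (fun y => a *: D2 y + D2' y) x
  = a *: lie_bracket_fun D1 D2 x + lie_bracket_fun D1 D2' x.
Proof. by move=> lin1; rewrite /lie_bracket_fun lin1 scalerBr opprD addrACA. Qed.

Lemma lie_bracket_fun_jacobi D1 D2 D3 x :
  linear D1 -> linear D2 -> linear D3 ->
  lie_bracket_fun D1 (lie_bracket_fun D2 D3) x
  + lie_bracket_fun D2 (lie_bracket_fun D3 D1) x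
  + lie_bracket_fun D3 (lie_bracket_fun D1 D2) x = 0.
Proof.
move=> lin1 lin2 lin3; rewrite /lie_bracket_fun.
rewrite (lin_funB lin1) (lin_funB lin2) (lin_funB lin3) !opprB !addrA.
(* Each of the twelve compositions D_i D_j D_k occurs twice, with opposite signs. *)
rewrite (ACl ((1*12)*(2*7)*(3*10)*(4*5)*(6*11)*(8*9)))%AC /=.
by rewrite !subrr !addNr !addr0.
Qed.

End LieBracketOfFunctions.

Section Derivations.
Variables (F : fieldType) (A : lmodType F) (mul : A -> A -> A).
Hypothesis mul_bilinear : bilinear_product mul.
Implicit Types (D : A -> A) (B : A -> A -> A).

Lemma mul_linearl y : linear (mul^~ y).
Proof. by move=> a x x'; case: mul_bilinear. Qed.

Lemma mul_linearr x : linear (mul x).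
Proof. by move=> a y y'; case: mul_bilinear. Qed.

Definition derivation D :=
  linear D /\ forall x y, D (mul x y) = mul x (D y) + mul (D x) y.

Lemma right_biderivationP B :
  right_biderivation mul B <-> forall z, derivation (B^~ z).
Proof.
split=> [[linB leibB] z | derB]; first by split=> [a x x'|x y]; rewrite ?linB ?leibB.
by split=> [a x x' z|x y z]; [exact: (derB z).1 | exact: (derB z).2].
Qed.

Lemma derivation0 : derivation (fun=> 0).
Proof.
split=> [a x x'|x y]; first by rewrite scaler0 addr0.
by rewrite (lin_fun0 (mul_linearr x)) (lin_fun0 (mul_linearl y)) addr0.
Qed.

Lemma derivationD D1 D2 :
  derivation D1 -> derivation D2 -> derivation (fun x => D1 x + D2 x).
Proof.
move=> [lin1 leib1] [lin2 leib2]; split=> [a x x'|x y].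
  by rewrite lin1 lin2 scalerDr addrACA.
by rewrite leib1 leib2 (lin_funD (mul_linearr x)) (lin_funD (mul_linearl y)) addrACA.
Qed.

Lemma derivationZ a D : derivation D -> derivation (fun x => a *: D x).
Proof.
move=> [linD leibD]; split=> [b x x'|x y].
  by rewrite linD scalerDr !scalerA mulrC.
by rewrite leibD (lin_funZ (mul_linearr x)) (lin_funZ (mul_linearl y)) scalerDr.
Qed.

Lemma derivation_comp D1 D2 x y : derivation D1 -> derivation D2 ->
  D1 (D2 (mul x y))
  = mul x (D1 (D2 y)) + mul (D1 (D2 x)) y + (mul (D1 x) (D2 y) + mul (D2 x) (D1 y)).
Proof.
move=> [lin1 leib1] [_ leib2].
by rewrite leib2 (lin_funD lin1) !leib1 (addrC (mul (D2 x) _)) addrACA.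
Qed.

Lemma derivation_lie_bracket D1 D2 :
  derivation D1 -> derivation D2 -> derivation (lie_bracket_fun D1 D2).
Proof.
move=> der1 der2; have [lin1 _] := der1; have [lin2 _] := der2.
split=> [|x y]; first exact: lie_bracket_fun_linear.
rewrite /lie_bracket_fun (derivation_comp x y der1 der2) (derivation_comp x y der2 der1).
rewrite [mul (D2 x) (D1 y) + _]addrC opprD addrACA subrr addr0.
by rewrite (lin_funB (mul_linearr x)) (lin_funB (mul_linearl y)) opprD addrACA.
Qed.

End Derivations.

Lemma funext2 (T U W : Type) (f g : T -> U -> W) :
  (forall x y, f x y = g x y) -> f = g.
Proof.
move=> eq_fg; apply: functional_extensionality => x.
exact: functional_extensionality.
Qed.

Theorem mainTheorem6 (F : fieldType) (A : lmodType F) (mul : A -> A -> A) :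
  bilinear_product mul ->
  [/\ right_biderivation mul (@bzero F A),
      (forall B1 B2, right_biderivation mul B1 -> right_biderivation mul B2 ->
         right_biderivation mul (badd B1 B2)),
      (forall (a : F) B, right_biderivation mul B ->
         right_biderivation mul (bscale a B)),
      (forall B1 B2, right_biderivation mul B1 -> right_biderivation mul B2 ->
         right_biderivation mul (bibracket B1 B2)) &
      [/\ (forall (a : F) B1 B1' B2, right_biderivation mul B1 ->
             right_biderivation mul B1' -> right_biderivation mul B2 ->
             bibracket (badd (bscale a B1) B1') B2
             = badd (bscale a (bibracket B1 B2)) (bibracket B1' B2)),
          (forall (a : F) B1 B2 B2', right_biderivation mul B1 ->
             right_biderivation mul B2 -> right_biderivation mul B2' ->
             bibracket B1 (badd (bscale a B2) B2')
             = badd (bscale a (bibracket B1 B2)) (bibracket B1 B2')),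
          (forall B, right_biderivation mul B -> bibracket B B = @bzero F A) &
          (forall B1 B2 B3, right_biderivation mul B1 ->
             right_biderivation mul B2 -> right_biderivation mul B3 ->
             badd (badd (bibracket B1 (bibracket B2 B3))
                        (bibracket B2 (bibracket B3 B1)))
                  (bibracket B3 (bibracket B1 B2)) = @bzero F A)]].
Proof.
move=> mul_bilinear; split.
- by apply/right_biderivationP => z; exact (derivation0 mul_bilinear).
- move=> B1 B2 /right_biderivationP der1 /right_biderivationP der2.
  by apply/right_biderivationP => z; exact (derivationD mul_bilinear (der1 z) (der2 z)).
- move=> a B /right_biderivationP derB.
  by apply/right_biderivationP => z; exact (derivationZ mul_bilinear a (derB z)).
- move=> B1 B2 /right_biderivationP der1 /right_biderivationP der2.
  by apply/right_biderivationP => z; exact (derivation_lie_bracket mul_bilinear (der1 z) (der2 z)).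
split.
- move=> a B1 B1' B2 _ _ /right_biderivationP der2; apply: funext2 => x y.
  exact (lie_bracket_funDl a (B1^~ y) (B1'^~ y) x (der2 y).1).
- move=> a B1 B2 B2' /right_biderivationP der1 _ _; apply: funext2 => x y.
  exact (lie_bracket_funDr a (B2^~ y) (B2'^~ y) x (der1 y).1).
- by move=> B _; apply: funext2 => x y; apply: subrr.
- move=> B1 B2 B3 /right_biderivationP der1 /right_biderivationP der2.
  move=> /right_biderivationP der3; apply: funext2 => x y.
  exact (lie_bracket_fun_jacobi x (der1 y).1 (der2 y).1 (der3 y).1).
Qed.
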